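(* Let $R\subseteq S$ be a module-finite inclusion of normal $F$-finite domains of characteristic $p>0$ such that the induced extension of fraction fields $K\subseteq L$ is not separable, and let $e\ge1$. Then the only $\phi\in\mathrm{Hom}_R(R^{1/p^e},R)$ that extends to an element $\bar\phi\in\mathrm{Hom}_S(S^{1/p^e},S)$ (i.e. with $\bar\phi|_{R^{1/p^e}}=\phi$) is the zero map.
   Context: $R^{1/p^e}\subseteq S^{1/p^e}$ are the rings of $p^e$-th roots inside an algebraic closure of $L$. $F$-finite: Frobenius is finite. *)

From HB Require Import structures.
From mathcomp Require Import all_boot all_order all_algebra.
From mathcomp Require Import all_field.
Set Implicit Arguments. Unset Strict Implicit. Unset Printing Implicit Defensive.
Import Order.TTheory GRing.Theory.
Local Open Scope ring_scope.

(* All rings live inside a fixed algebraically closed field Omega (which plays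
   the role of an algebraic closure of L); subrings are predicates on Omega. *)
Section Defs.
Variable Omega : closedFieldType.

Definition is_subring (R : {pred Omega}) : Prop :=
  [/\ 1 \in R, forall x y, x \in R -> y \in R -> x - y \in R
    & forall x y, x \in R -> y \in R -> x * y \in R].

Definition fracf (R : {pred Omega}) : Omega -> Prop :=
  fun x => exists a b, [/\ a \in R, b \in R, b != 0 & x = a / b].

Definition integral_over (R : {pred Omega}) (x : Omega) : Prop :=
  exists q : {poly Omega}, [/\ q \is monic, q \is a polyOver R & root q x].

Definition normal_domain (R : {pred Omega}) : Prop :=
  forall x, fracf R x -> integral_over R x -> x \in R.

Definition fin_gen (R M : {pred Omega}) : Prop :=
  exists s : seq Omega, {subset s <= M} /\
    forall y, y \in M -> exists r : 'I_(size s) -> Omega,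
      (forall i, r i \in R) /\ y = \sum_(i < size s) r i * s`_i.

(* R^{1/q} = { x in Omega | x^q in R } *)
Definition root_ring (q : nat) (R : {pred Omega}) : {pred Omega} :=
  [pred x | x ^+ q \in R].

(* F-finite: Frobenius is finite, i.e. R^{1/p} is a finite R-module *)
Definition F_finite (p : nat) (R : {pred Omega}) : Prop :=
  fin_gen R (root_ring p R).

Definition separable_elt (K : Omega -> Prop) (x : Omega) : Prop :=
  exists q : {poly Omega},
    [/\ q != 0, (forall i, K q`_i), root q x & separable_poly q].

Definition separable_ext (K L : Omega -> Prop) : Prop :=
  forall x, L x -> separable_elt K x.

Definition is_hom (R A B : {pred Omega}) (phi : Omega -> Omega) : Prop :=
  [/\ forall x y, x \in A -> y \in A -> phi (x + y) = phi x + phi y,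
      forall r x, r \in R -> x \in A -> phi (r * x) = r * phi x
    & forall x, x \in A -> phi x \in B].

End Defs.

(* Since K ⊆ L is not separable, some y = a/b with a, b in S is inseparable over K.
   A polynomial g over R of least degree vanishing at y then has g' = 0, so
   g = sum_j g_(jp) X^(jp), and p-th roots alpha_j of its coefficients satisfy
   sum_j alpha_j y^j = 0, i.e. sum_j a^j b^(m-j) alpha_j = 0 where deg g = mp.
   The alpha_j lie in R^(1/p^e); applying the S-linear extension of phi to
   sum_j a^j b^(m-j) alpha_j x shows that sum_j phi(alpha_j x) X^j, a polynomial over R
   of degree at most m < mp, vanishes at y, hence is zero. So phi(alpha_m x) = 0 for
   all x, and x := alpha_m^(p^e - 1) x' gives alpha_m^(p^e) phi(x') = 0. *)

From HB Require Import structures.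
From mathcomp Require Import all_boot all_order all_algebra all_field.
From Stdlib Require Import Classical ClassicalEpsilon.
Set Implicit Arguments. Unset Strict Implicit. Unset Printing Implicit Defensive.
Import GRing.Theory.
Local Open Scope ring_scope.

Lemma ex_minn_prop (P : nat -> Prop) :
  (exists n, P n) -> exists2 m, P m & forall k, P k -> (m <= k)%N.
Proof.
move=> [n Pn]; pose b k := is_left (excluded_middle_informative (P k)).
have bP k : reflect (P k) (b k).
  by rewrite /b; case: excluded_middle_informative => ? /=; constructor.
case: (ex_minnP (ex_intro b n (introT (bP n) Pn))) => m /bP Pm minm.
by exists m => // k /bP /minm.
Qed.

Lemma is_subring_closed (Omega : closedFieldType) (R : {pred Omega}) :
  is_subring R -> subring_closed R.
Proof. by case. Qed.

Lemma size_subr_lead (F : nzRingType) (u v : {poly F}) :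
  u != 0 -> size u = size v -> lead_coef u = lead_coef v -> (size (u - v)%R < size u)%N.
Proof.
move=> u0 suv luv; rewrite -[size u]prednK ?size_poly_gt0 // ltnS.
apply/leq_sizeP => j; rewrite leq_eqVlt => /orP[/eqP <-|lt_j].
  by rewrite coefB -lead_coefE suv -lead_coefE luv subrr.
by rewrite coefB !nth_default ?subr0 // -?suv -[size u]prednK ?size_poly_gt0.
Qed.

Section PolyOverSubring.
Variables (Omega : closedFieldType) (R : {pred Omega}).
Hypothesis subringR : is_subring R.
HB.instance Definition _ :=
  GRing.isSubringClosed.Build Omega R (is_subring_closed subringR).

Lemma polyOver_pseudo_div f g : f \is a polyOver R -> g \is a polyOver R -> g != 0 ->
  exists k d r, [/\ d \is a polyOver R, r \is a polyOver R,
    lead_coef g ^+ k *: f = d * g + r & (size r < size g)%N].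
Proof.
move=> + Rg g0; have [n] := ubnP (size f); elim: n f => // n IH f /ltnSE sf Rf.
have [lt_fg|le_gf] := ltnP (size f) (size g).
  exists 0%N, 0, f; split; rewrite ?rpred0 //.
  by rewrite expr0 scale1r mul0r add0r.
have f0 : f != 0 by rewrite -size_poly_gt0 (leq_trans _ le_gf) ?size_poly_gt0.
have lg0 : lead_coef g != 0 by rewrite lead_coef_eq0.
have lf0 : lead_coef f != 0 by rewrite lead_coef_eq0.
pose t := lead_coef f *: 'X^(size f - size g) * g.
have Rlg : lead_coef g \in R by apply: polyOverP.
have Rt : t \is a polyOver R by rewrite rpredM ?polyOverZ ?polyOverXn //; apply: polyOverP.
have st : size t = size f.
  by rewrite /t -scalerAl size_scale // mulrC size_mulXn // subnK.
have lt_f1 : (size (lead_coef g *: f - t)%R < size f)%N.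
  rewrite -[size f](size_scale _ lg0); apply: size_subr_lead.
  - by rewrite scaler_eq0 negb_or lg0.
  - by rewrite size_scale.
  by rewrite /t -scalerAl !lead_coefZ lead_coef_monicM ?monicXn // mulrC.
have [k [d [r [Rd Rr def_f sr]]]] :=
  IH _ (leq_trans lt_f1 sf) (rpredB (polyOverZ Rlg Rf) Rt).
exists k.+1, (d + lead_coef g ^+ k *: (lead_coef f *: 'X^(size f - size g))), r.
split => //.
  by rewrite rpredD // polyOverZ ?rpredX ?polyOverZ ?polyOverXn //; apply: polyOverP.
rewrite exprSr -scalerA -[lead_coef g *: f](subrK t) scalerDr def_f.
by rewrite mulrDl -scalerAl [RHS]addrAC.
Qed.

Definition min_poly_over (y : Omega) (g : {poly Omega}) :=
  [/\ g \is a polyOver R, g != 0, root g y &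
   forall h, h \is a polyOver R -> h != 0 -> root h y -> (size g <= size h)%N].

Lemma min_poly_over_exists y h :
  h \is a polyOver R -> h != 0 -> root h y -> exists g, min_poly_over y g.
Proof.
move=> Rh h0 hy.
have [_ [g [Rg g0 gy <-]] min_g] := ex_minn_prop
  (ex_intro (fun n => exists g, [/\ g \is a polyOver R, g != 0, root g y & size g = n])
     _ (ex_intro _ h (And4 Rh h0 hy erefl))).
by exists g; split=> // h' Rh' h'0 h'y; apply: min_g; exists h'.
Qed.

Lemma min_poly_over_pdvd y g h : min_poly_over y g ->
  h \is a polyOver R -> root h y ->
  exists k d, d \is a polyOver R /\ lead_coef g ^+ k *: h = d * g.
Proof.
move=> [Rg g0 gy min_g] Rh hy.
have [k [d [r [Rd Rr def_h sr]]]] := polyOver_pseudo_div Rh Rg g0.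
suff r0 : r = 0 by exists k, d; rewrite def_h r0 addr0.
apply/eqP; apply: contraTT sr => r0; rewrite -leqNgt min_g //.
have /(congr1 (horner^~ y)) := def_h.
by rewrite hornerZ hornerD hornerM (eqP hy) (eqP gy) !mulr0 add0r => ry; rewrite /root -ry.
Qed.

(* A common root z of g and g' has a minimal polynomial g2 with size g2 < size g, and
   a scalar multiple of g factors as d * g2; as d or g2 vanishes at y, this
   contradicts the minimality of g. *)
Lemma min_poly_over_separable y g :
  min_poly_over y g -> g^`() != 0 -> separable_poly g.
Proof.
move=> mg; have [Rg g0 gy min_g] := mg => g'0.
rewrite separable_poly.unlock; apply: contraT; rewrite coprimep_def.
case/closed_rootP=> z gcd_z.
have gz : root g z := root_dvdp (dvdp_gcdl _ _) gcd_z.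
have g'z : root g^`() z := root_dvdp (dvdp_gcdr _ _) gcd_z.
have [g2 mg2] := min_poly_over_exists Rg g0 gz; have [Rg2 g20 g2z min_g2] := mg2.
have lt_g2g : (size g2 < size g)%N.
  exact: leq_ltn_trans (min_g2 _ (polyOver_deriv Rg) g'0 g'z) (lt_size_deriv g0).
have [k [d [Rd def_g]]] := min_poly_over_pdvd mg2 Rg gz.
have c0 : lead_coef g2 ^+ k != 0 by rewrite expf_neq0 ?lead_coef_eq0.
have d0 : d != 0.
  have : lead_coef g2 ^+ k *: g != 0 by rewrite scaler_eq0 negb_or c0.
  by rewrite def_g; apply: contra_neq => ->; rewrite mul0r.
have sg : size g = (size d + size g2).-1 by rewrite -(size_scale g c0) def_g size_mul.
have : root (d * g2) y by rewrite -def_g rootZ.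
rewrite rootM => /orP[dy|g2y].
  have := min_g d Rd d0 dy; have := root_size_gt1 g20 g2z; rewrite sg.
  by move: (size d) (size g2) => m [|[|n]] // _; rewrite !addnS ltnNge leq_addr.
by have := min_g g2 Rg2 g20 g2y; rewrite leqNgt lt_g2g.
Qed.

Lemma min_poly_over_deriv_eq0 y g :
  min_poly_over y g -> ~ separable_elt (fracf R) y -> g^`() = 0.
Proof.
move=> mg insep; have [Rg g0 gy _] := mg.
have [//|g'0] := eqVneq g^`() 0; case: insep; exists g; split => //.
  move=> i; exists g`_i, 1; split; rewrite ?rpred1 ?oner_neq0 ?divr1 //.
  exact: polyOverP.
exact: min_poly_over_separable mg g'0.
Qed.

End PolyOverSubring.

Lemma char_poly_polyOver (F : comNzRingType) (R : subringClosed F) n (A : 'M[F]_n) :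
  (forall i j, A i j \in R) -> char_poly A \is a polyOver R.
Proof.
move=> AR; rewrite /char_poly /determinant.
apply: rpred_sum => sg _; rewrite rpredM ?rpredX ?rpredN ?rpred1 //.
apply: rpred_prod => i _; rewrite !mxE.
by rewrite rpredB ?polyOverC ?rpredMn ?polyOverX.
Qed.

Lemma horner_coef0_drop (F : comNzRingType) (Q : {poly F}) x :
  Q.[x] = Q`_0 + (drop_poly 1 Q).[x] * x.
Proof.
have take1 : take_poly 1 Q = (Q`_0)%:P.
  by apply/polyP => -[|i]; rewrite coef_take_poly coefC.
by rewrite -{1}(poly_take_drop 1 Q) take1 hornerD hornerM hornerX hornerC.
Qed.

Section ModuleFinite.
Variables (Omega : closedFieldType) (R S : {pred Omega}).
Hypotheses (subringR : is_subring R) (subringS : is_subring S).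
HB.instance Definition _ :=
  GRing.isSubringClosed.Build Omega R (is_subring_closed subringR).
HB.instance Definition _ :=
  GRing.isSubringClosed.Build Omega S (is_subring_closed subringS).
Hypotheses (sub_RS : {subset R <= S}) (finRS : fin_gen R S).

(* The determinant trick: the generators of S form an eigenvector, for the
   eigenvalue s, of a matrix with entries in R. *)
Lemma integral_over_fin_gen s : s \in S -> integral_over R s.
Proof.
move=> Ss; have [b [Sb span]] := finRS.
have /fin_all_exists[c Hc] : forall i : 'I_(size b), exists c : 'I_(size b) -> Omega,
    (forall j, c j \in R) /\ s * b`_i = \sum_(j < size b) c j * b`_j.
  by move=> i; apply: span; rewrite rpredM ?(Sb _ (mem_nth 0 (ltn_ord i))).
pose A := \matrix_(i, j) c j i.
exists (char_poly A); split; first exact: char_poly_monic.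
  by apply: char_poly_polyOver => i j; rewrite mxE; case: (Hc j).
rewrite -eigenvalue_root_char; apply/eigenvalueP; exists (\row_i b`_i).
  apply/rowP => j; rewrite !mxE; case: (Hc j) => _ ->.
  by apply: eq_bigr => i _; rewrite !mxE mulrC.
apply/eqP => /rowP b0; have [r [_ def1]] := span 1 (rpred1 _).
have := oner_neq0 Omega; rewrite def1 big1 ?eqxx // => i _.
by have := b0 i; rewrite !mxE => ->; rewrite mulr0.
Qed.

Lemma fracf_algebraic y :
  fracf S y -> exists2 h, h \is a polyOver R & h != 0 /\ root h y.
Proof.
case=> a [b [Sa Sb b0 ->]].
have [P [/monic_neq0 P0 RP Pb]] := integral_over_fin_gen Sb.
have [Q [RQ Q0 Qb min_Q]] := min_poly_over_exists RP P0 Pb.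
pose T := drop_poly 1 Q.
have RT : T \is a polyOver R.
  by apply/polyOverP => i; rewrite coef_drop_poly (polyOverP RQ).
have defQ0 : Q`_0 = - (T.[b] * b).
  by apply/eqP; rewrite -addr_eq0 -horner_coef0_drop.
have sT : size T = (size Q).-1 by rewrite size_drop_poly subn1.
have T0 : T != 0 by rewrite -size_poly_gt0 sT -subn1 subn_gt0 (root_size_gt1 Q0 Qb).
have Q00 : Q`_0 != 0.
  apply/negP; rewrite defQ0 oppr_eq0 mulf_eq0 (negbTE b0) orbF => Tb.
  by have := min_Q T RT T0 Tb; rewrite sT leqNgt ltn_predL size_poly_gt0 Q0.
have Sc : - (T.[b] * a) \in S by rewrite rpredN rpredM ?rpred_horner ?(polyOverS sub_RS).
have [P' [/monic_neq0 P'0 RP' P'c]] := integral_over_fin_gen Sc.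
have RQ0 : Q`_0 \in R by apply: (polyOverP RQ).
exists (P' \Po (Q`_0 *: 'X)); first by rewrite polyOver_comp ?polyOverZ ?polyOverX.
rewrite comp_poly2_eq0 ?size_scale ?size_polyX // root_comp hornerZ hornerX.
by rewrite defQ0 mulNr -mulrA [b * _]mulrC divfK.
Qed.
End ModuleFinite.

Lemma closed_expn_root (F : closedFieldType) n (c : F) :
  (0 < n)%N -> exists z, z ^+ n == c.
Proof.
move=> n_gt0; have : size ('X^n - c%:P : {poly F}) != 1.
  by rewrite size_XnsubC // eqSS -lt0n.
case/closed_rootP => z; rewrite rootE hornerD hornerN hornerXn hornerC subr_eq0.
by exists z.
Qed.

Section Frobenius.
Variables (Omega : closedFieldType) (p : nat).
Hypothesis pcharp : p \in [pchar Omega].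

Lemma pchar_gt0 : (0 < p)%N.
Proof. exact: prime_gt0 (pcharf_prime pcharp). Qed.

Lemma pchar_nat_expn k : [pchar Omega].-nat (p ^ k)%N.
Proof. by rewrite (eq_pnat _ (pcharf_eq pcharp)) pnatX pnat_id ?(pcharf_prime pcharp). Qed.

Lemma root_ring_subring k (T : {pred Omega}) :
  is_subring T -> is_subring (root_ring (p ^ k)%N T).
Proof.
move=> sT; have rT := is_subring_closed sT.
split=> [|x y|x y]; rewrite !inE ?expr1n ?rpred1 //.
  by rewrite exprDn_pchar ?exprNn_pchar ?pchar_nat_expn //; apply: rpredB.
by rewrite exprMn; apply: rpredM.
Qed.


Lemma deriv_eq0_coef (g : {poly Omega}) i : g^`() = 0 -> ~~ (p %| i)%N -> g`_i = 0.
Proof.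
case: i => [|i] g'0; first by rewrite dvdn0.
rewrite (dvdn_pcharf pcharp) => pi; apply/eqP.
have /eqP := coef_deriv g i; rewrite g'0 coef0 eq_sym -mulr_natr mulf_eq0.
by rewrite (negbTE pi) orbF.
Qed.

Lemma deriv_eq0_comp_Xp (g : {poly Omega}) : g^`() = 0 ->
  g = \poly_(j < ((size g).-1 %/ p).+1) g`_(j * p) \Po 'X^p.
Proof.
move=> g'0; apply/polyP => i; rewrite coef_comp_poly_Xn ?pchar_gt0 // coef_poly.
have [p_i|/(deriv_eq0_coef g'0) -> //] := boolP (p %| i)%N.
rewrite divnK //; have [lt_ig|le_gi] := ltnP i (size g); last first.
  by rewrite nth_default ?if_same.
by rewrite ltnS leq_div2r ?pchar_gt0 // -ltnS prednK // (leq_ltn_trans _ lt_ig).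
Qed.

Lemma deriv_eq0_root_relation (g : {poly Omega}) y : g != 0 -> root g y -> g^`() = 0 ->
  exists m (alpha : nat -> Omega), [/\ size g = (m * p).+1,
    forall j, alpha j ^+ p = g`_(j * p), alpha m != 0
    & \sum_(j < m.+1) alpha j * y ^+ j = 0].
Proof.
move=> g0 gy g'0; set m := ((size g).-1 %/ p)%N.
pose alpha j := xchoose (closed_expn_root (g`_(j * p)) pchar_gt0).
have alpha_p j : alpha j ^+ p = g`_(j * p).
  exact: eqP (xchooseP (closed_expn_root _ pchar_gt0)).
have p_dvd : (p %| (size g).-1)%N.
  have : lead_coef g != 0 by rewrite lead_coef_eq0.
  by rewrite lead_coefE; apply: contraR => /(deriv_eq0_coef g'0) ->; rewrite eqxx.
have size_g : size g = (m * p).+1 by rewrite divnK // prednK // size_poly_gt0.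
exists m, alpha; split => //.
  have : alpha m ^+ p != 0.
    by rewrite alpha_p -[(m * p)%N]/((m * p).+1.-1) -size_g -lead_coefE lead_coef_eq0.
  by apply: contra_neq => ->; rewrite expr0n (gtn_eqF pchar_gt0).
have : (\sum_(j < m.+1) alpha j * y ^+ j) ^+ p == 0.
  rewrite -(pFrobenius_autE pcharp) rmorph_sum.
  under eq_bigr do rewrite /= pFrobenius_autE exprMn alpha_p exprAC.
  rewrite -(horner_poly _ (fun j => g`_(j * p))) -[y ^+ p]hornerXn -horner_comp.
  by rewrite -deriv_eq0_comp_Xp.
by rewrite expf_eq0 pchar_gt0 => /eqP.
Qed.
End Frobenius.

Section HomSum.
Variables (Omega : closedFieldType) (R A B : {pred Omega}) (f : Omega -> Omega).
Hypotheses (subringA : is_subring A) (sub_RA : {subset R <= A}) (hom_f : is_hom R A B f).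
HB.instance Definition _ :=
  GRing.isSubringClosed.Build Omega A (is_subring_closed subringA).

Lemma is_hom0 : f 0 = 0.
Proof. by case: hom_f => fD _ _; apply: (addrI (f 0)); rewrite -fD ?rpred0 // !addr0. Qed.

Lemma is_hom_sum I (r : seq I) (c x : I -> Omega) :
  (forall i, c i \in R) -> (forall i, x i \in A) ->
  f (\sum_(i <- r) c i * x i) = \sum_(i <- r) c i * f (x i).
Proof.
case: hom_f => fD fZ _ Rc Ax; have Acx j : c j * x j \in A by rewrite rpredM ?Ax ?sub_RA ?Rc.
elim: r => [|i r IH]; first by rewrite !big_nil is_hom0.
by rewrite !big_cons fD ?fZ ?IH ?rpred_sum.
Qed.
End HomSum.

Lemma mulr_sum_exprdiv (F : fieldType) (a b : F) m (c : nat -> F) : b != 0 ->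
  b ^+ m * \sum_(j < m.+1) c j * (a / b) ^+ j = \sum_(j < m.+1) c j * (a ^+ j * b ^+ (m - j)).
Proof.
move=> b0; rewrite mulr_sumr; apply: eq_bigr => -[j /=]; rewrite ltnS => le_jm _.
rewrite mulrCA; congr (_ * _).
rewrite expr_div_n -{1}(subnK le_jm) exprD -mulrA [b ^+ j * _]mulrC divfK ?expf_neq0 //.
exact: mulrC.
Qed.

Section ExtendableHom.
Variables (Omega : closedFieldType) (p e : nat) (R S : {pred Omega}).
Hypotheses (pcharp : p \in [pchar Omega]) (e_gt0 : (0 < e)%N).
Hypotheses (subringR : is_subring R) (subringS : is_subring S) (sub_RS : {subset R <= S}).
Local Notation q := (p ^ e)%N.
HB.instance Definition _ :=
  GRing.isSubringClosed.Build Omega R (is_subring_closed subringR).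
HB.instance Definition _ := GRing.isSubringClosed.Build Omega (root_ring q R)
  (is_subring_closed (root_ring_subring pcharp e subringR)).

Variables (phi phibar : Omega -> Omega).
Hypotheses (hom_phi : is_hom R (root_ring q R) R phi)
  (hom_phibar : is_hom S (root_ring q S) S phibar)
  (phibar_ext : {in root_ring q R, phibar =1 phi}).

Variables (a b : Omega) (g : {poly Omega}) (m : nat) (alpha : nat -> Omega).
Hypotheses (Sa : a \in S) (Sb : b \in S) (b0 : b != 0).
Hypotheses (min_g : min_poly_over R (a / b) g) (size_g : size g = (m * p).+1).
Hypotheses (alpha_pR : forall j, alpha j ^+ p \in R) (alpha_m0 : alpha m != 0)
  (alpha_rel : \sum_(j < m.+1) alpha j * (a / b) ^+ j = 0).

Lemma alpha_root_ring j : alpha j \in root_ring q R.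
Proof. by rewrite inE -(prednK e_gt0) expnS exprM rpredX. Qed.

Lemma alpha_relation_cleared x :
  \sum_(k < m.+1) a ^+ k * b ^+ (m - k) * (alpha k * x) = 0.
Proof.
transitivity ((b ^+ m * \sum_(k < m.+1) alpha k * (a / b) ^+ k) * x).
  rewrite (mulr_sum_exprdiv a m alpha b0) mulr_suml.
  by apply: eq_bigr => k _; rewrite mulrCA mulrA.
by rewrite alpha_rel mulr0 mul0r.
Qed.

Lemma phi_alpha_mul_eq0 j x : (j <= m)%N -> x \in root_ring q R -> phi (alpha j * x) = 0.
Proof.
move=> le_jm Rx; have [_ _ phiR] := hom_phi.
have Ralx k : alpha k * x \in root_ring q R by rewrite rpredM ?alpha_root_ring.
have Sq u : u \in root_ring q R -> u \in root_ring q S by rewrite !inE => /sub_RS.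
pose H := \poly_(k < m.+1) phi (alpha k * x).
have RH : H \is a polyOver R by apply/polyOver_poly => k _; apply: phiR.
have Hy : root H (a / b).
  have : b ^+ m * H.[a / b] = 0.
    rewrite horner_poly (mulr_sum_exprdiv a m (fun k => phi (alpha k * x)) b0).
    apply: etrans (is_hom0 (root_ring_subring pcharp e subringS) hom_phibar).
    rewrite -[X in phibar X](alpha_relation_cleared x).
    rewrite (is_hom_sum (root_ring_subring pcharp e subringS) _ hom_phibar).
    - by apply: eq_bigr => k _; rewrite phibar_ext // mulrC.
    - by move=> s Ss; rewrite inE rpredX.
    - by move=> k; rewrite rpredM ?rpredX.
    by move=> k; apply: Sq.
  by move/eqP; rewrite mulf_eq0 expf_eq0 (negbTE b0) andbF.
have [_ g0 gy min_size] := min_g.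
have m_gt0 : (0 < m)%N.
  by have := root_size_gt1 g0 gy; rewrite size_g ltnS muln_gt0 => /andP[].
have H0 : H = 0.
  apply/eqP; apply: contraLR (size_poly m.+1 (fun k => phi (alpha k * x))) => H0.
  rewrite -ltnNge (leq_trans _ (min_size H RH H0 Hy)) // size_g ltnS ltn_Pmulr //.
  exact: prime_gt1 (pcharf_prime pcharp).
have := coef_poly m.+1 (fun k => phi (alpha k * x)) j.
by rewrite -/H H0 coef0 ltnS le_jm => <-.
Qed.

Lemma extendable_hom_eq0 x : x \in root_ring q R -> phi x = 0.
Proof.
move=> Rx; have [_ phiZ _] := hom_phi; have Ram := alpha_root_ring m.
have := phi_alpha_mul_eq0 (leqnn m) (rpredM (rpredX q.-1 Ram) Rx).
rewrite mulrA -exprS prednK ?expn_gt0 ?(pchar_gt0 pcharp) // phiZ //.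
by move/eqP; rewrite mulf_eq0 expf_eq0 (negbTE alpha_m0) andbF => /eqP.
Qed.
End ExtendableHom.

Theorem proposition5p2 (Omega : closedFieldType) (p e : nat)
    (R S : {pred Omega}) :
  p \in [pchar Omega] ->
  is_subring R -> is_subring S -> {subset R <= S} ->
  normal_domain R -> normal_domain S ->
  F_finite p R -> F_finite p S ->
  fin_gen R S ->
  ~ separable_ext (fracf R) (fracf S) ->
  (0 < e)%N ->
  forall phi : Omega -> Omega,
    is_hom R (root_ring (p ^ e) R) R phi ->
    (exists phibar : Omega -> Omega,
        is_hom S (root_ring (p ^ e) S) S phibar /\
        (forall x, x \in root_ring (p ^ e) R -> phibar x = phi x)) ->
  forall x, x \in root_ring (p ^ e) R -> phi x = 0.
Proof.
move=> pcharp sR sS sub_RS _ _ _ _ finRS insep e_gt0 phi hom_phi [phibar [hom_phibar ext]].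
have [y [Sy y_insep]] : exists y, fracf S y /\ ~ separable_elt (fracf R) y.
  by apply: NNPP => none; apply: insep => y Sy; apply: NNPP => ny; apply: none; exists y.
have [h Rh [h0 hy]] := fracf_algebraic sR sS sub_RS finRS Sy.
have [g min_g] := min_poly_over_exists Rh h0 hy; have [Rg g0 gy _] := min_g.
have [m [alpha [size_g alpha_p alpha_m0 rel]]] :=
  deriv_eq0_root_relation pcharp g0 gy (min_poly_over_deriv_eq0 sR min_g y_insep).
have alpha_pR j : alpha j ^+ p \in R by rewrite alpha_p (polyOverP Rg).
case: Sy min_g rel => a [b [Sa Sb b0 ->]] min_g rel.
by apply: (extendable_hom_eq0 pcharp e_gt0 sR sS sub_RS hom_phi hom_phibar ext Sa Sb b0 min_g size_g
  alpha_pR alpha_m0).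
Qed.
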